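(* Assume the setting and assumptions (A1)–(A5) described in the context, so that the closure of $A$ generates a conservative Markov semigroup $\{T(t)\}_{t\ge0}$ in $C(\bar L)$, and assume additionally that $\iota_n(M_n)$ converges weakly to a probability measure $P$ on $\bar L$. Let $X(t)$ be the Markov process in $\bar L$ with transition semigroup $\{T(t)\}$ and initial distribution $P$ (which is stationary), and for each $n$ let $(\lambda_n(k))_{k=0,1,2,\dots}$ be the stationary Markov chain on $L_n$ with transition matrix $T_n$ and initial distribution $M_n$. Then the finite-dimensional distributions of the chains converge to those of $X$ under the time scaling in which one step corresponds to time $\varepsilon_n$: for any $0\le t_1<\dots<t_k$ and $f_1,\dots,f_k\in C(\bar L)$, $$\lim_{n\to\infty}\mathbb E\Big[\prod_{i=1}^k f_i\big(\iota_n(\lambda_n([\varepsilon_n^{-1}t_i]))\big)\Big]=\mathbb E\Big[\prod_{i=1}^kf_i(X(t_i))\Big].$$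
   Context: $L=\bigsqcup_{n\ge0}L_n$ is a graded set with $L_0$ a singleton and each $L_n$ finite; $p^\downarrow:L\times L\to[0,\infty)$ vanishes unless $|\lambda|=|\mu|+1$ and $\sum_{\mu\in L_{|\lambda|-1}}p^\downarrow(\lambda,\mu)=1$ for $|\lambda|\ge1$. $\{M_n\}$ is a coherent system (probability measures on $L_n$ with $\sum_{\lambda\in L_n}M_n(\lambda)p^\downarrow(\lambda,\mu)=M_{n-1}(\mu)$) with $M_n(\lambda)>0$ everywhere; $p^\uparrow(\lambda,\nu)=\frac{M_{n+1}(\nu)}{M_n(\lambda)}p^\downarrow(\nu,\lambda)$; $T_n(\lambda,\tilde\lambda)=\sum_{\nu\in L_{n+1}}p^\uparrow(\lambda,\nu)p^\downarrow(\nu,\tilde\lambda)$, acting on real functions on $L_n$ (norm $\|g\|_n=\sup|g|$) by $(T_ng)(\lambda)=\sum_{\tilde\lambda}T_n(\lambda,\tilde\lambda)g(\tilde\lambda)$. $\bar L$ is a topological space, $\iota_n:L_n\to\bar L$ injective, $\pi_n:C(\bar L)\to C(L_n)$, $(\pi_nf)(\lambda)=f(\iota_n(\lambda))$. Assumptions: (A1) $\bar L$ compact metrizable separable; (A2) every nonempty open set meets $\iota_n(L_n)$ for all large $n$; (A3) there is a dense subspace $\mathcal F\subset C(\bar L)$ with an exhaustive ascending sequence of finite-dimensional subspaces $\mathcal F^m$ such that for each $m$ and all large $n$, $\pi_n$ is injective on $\mathcal F^m$ and $\pi_n(\mathcal F^m)$ is $T_n$-invariant; (A4) there are $\varepsilon_n>0$,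 $\varepsilon_n\to0$, such that for $f\in\mathcal F^m$ the elements $g_n\in\mathcal F^m$ with $\pi_n(g_n)=\varepsilon_n^{-1}(T_n-\mathbf 1)\pi_n f$ converge in $\mathcal F^m$ to a limit $Af$; (A5) $1\in\mathcal F$. *)

From HB Require Import structures.
From mathcomp Require Import all_boot all_order all_algebra.
From mathcomp Require Import all_classical all_reals all_analysis.
Unset Printing Implicit Defensive.
Import Order.TTheory GRing.Theory Num.Theory.
Import numFieldNormedType.Exports.
Local Open Scope classical_set_scope.
Local Open Scope ring_scope.

Section Defs.
Variable R : realType.

Variable L : nat -> finType.

Definition pup (pd : forall n, L n.+1 -> L n -> R) (M : forall n, L n -> R)
  (n : nat) (lam : L n) (nu : L n.+1) : R :=
  M n.+1 nu / M n lam * pd n nu lam.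

Definition Tker pd M (n : nat) (lam lam' : L n) : R :=
  \sum_(nu : L n.+1) pup pd M n lam nu * pd n nu lam'.

Definition Top pd M (n : nat) (g : L n -> R) : L n -> R :=
  fun lam => \sum_(lam' : L n) Tker pd M n lam lam' * g lam'.

Variable Lb : pseudoPMetricType R.

Definition pi_n (iota : forall n, L n -> Lb) (n : nat) (f : Lb -> R) : L n -> R :=
  fun lam => f (iota n lam).

Definition ucvg {I : Type} (F : set_system I) (g : I -> Lb -> R) (f : Lb -> R) :=
  forall e : R, 0 < e -> \forall i \near F, forall x, `|g i x - f x| < e.

Definition span_of (d : nat) (b : 'I_d -> Lb -> R) : set (Lb -> R) :=
  [set f | exists c : 'I_d -> R, forall x, f x = \sum_(i < d) c i * b i x].

Definition fin_dim_subspace (S : set (Lb -> R)) :=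
  exists d (b : 'I_d -> Lb -> R), (forall i, continuous (b i)) /\ S = span_of d b.

(* For the chain: given steps a_1 <= ... <= a_k and f_1..f_k,
   E[Π f_i(ι_n(λ(a_i)))] = Σ_λ M_n(λ) (chain_fdd n 0 [(a_i,f_i)]) (λ) where
   chain_fdd prev ((a,f)::l) = T_n^{a-prev} ( (f∘ι_n) · chain_fdd a l ). *)
Fixpoint chain_fdd pd M (iota : forall n, L n -> Lb) (n : nat) (prev : nat)
  (l : seq (nat * (Lb -> R))) : L n -> R :=
  match l with
  | [::] => fun _ => 1
  | (a, f) :: l' =>
      iter (a - prev)%N (Top pd M n)
        (fun lam => f (iota n lam) * chain_fdd pd M iota n a l' lam)
  end.

(* For the Markov process with semigroup T(t):
   E[Π f_i(X(t_i))] = ∫ (semi_fdd 0 [(t_i,f_i)]) dP where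
   semi_fdd prev ((t,f)::l) = T(t-prev) ( f · semi_fdd t l ). *)
Fixpoint semi_fdd (Tt : R -> (Lb -> R) -> (Lb -> R)) (prev : R)
  (l : seq (R * (Lb -> R))) : Lb -> R :=
  match l with
  | [::] => fun _ => 1
  | (t, f) :: l' => Tt (t - prev) (fun x => f x * semi_fdd Tt t l' x)
  end.

(* The closure of A (defined on F = ∪ F^m) is the generator of T(t):
   for f,h ∈ C(Lb): (T(t)f - f)/t -> h uniformly as t -> 0+ iff (f,h) lies in
   the closure of the graph of A|_F in C(Lb) x C(Lb). *)
Definition generated_by_closure (Tt : R -> (Lb -> R) -> (Lb -> R))
  (F : set (Lb -> R)) (A : (Lb -> R) -> (Lb -> R)) :=
  forall f h : Lb -> R, continuous f -> continuous h ->
    (ucvg (0^'+) (fun t x => (Tt t f x - f x) / t) h <->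
     exists fk : nat -> Lb -> R, (forall k, F (fk k)) /\
       ucvg \oo fk f /\ ucvg \oo (fun k => A (fk k)) h).

Definition markov_semigroup (Tt : R -> (Lb -> R) -> (Lb -> R)) :=
  (forall t (f : Lb -> R), 0 <= t -> continuous f -> continuous (Tt t f)) /\
      (forall t (f g : Lb -> R) (a : R), 0 <= t -> continuous f -> continuous g ->
         Tt t (fun x => a * f x + g x) = (fun x => a * Tt t f x + Tt t g x)) /\
      (forall f : Lb -> R, continuous f -> Tt 0 f = f) /\
      (forall s t (f : Lb -> R), 0 <= s -> 0 <= t -> continuous f ->
         Tt (s + t) f = Tt s (Tt t f)) /\
      (forall t (f : Lb -> R), 0 <= t -> continuous f -> (forall x, 0 <= f x) ->
         forall x, 0 <= Tt t f x) /\
      (forall t, 0 <= t -> Tt t (fun _ => 1) = (fun _ => 1)) /\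
      (forall f : Lb -> R, continuous f -> ucvg (0^'+) (fun t => Tt t f) f).

End Defs.

Arguments pup {R L}.
Arguments Tker {R L}.
Arguments Top {R L}.
Arguments pi_n {R L Lb}.
Arguments ucvg {R Lb I}.
Arguments span_of {R Lb}.
Arguments fin_dim_subspace {R Lb}.
Arguments chain_fdd {R L Lb}.
Arguments semi_fdd {R Lb}.
Arguments generated_by_closure {R Lb}.
Arguments markov_semigroup {R Lb}.

From HB Require Import structures.
From mathcomp Require Import all_boot all_order all_algebra.
From mathcomp Require Import all_classical all_reals all_analysis.
From mathcomp Require Import ring lra.
Import Order.TTheory GRing.Theory Num.Theory.
Import numFieldNormedType.Exports.
Local Open Scope classical_set_scope.
Local Open Scope ring_scope.

(* Each [Fm m] is finite dimensional, so its elements are determined, linearly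
   and boundedly, by their values at finitely many points.  Hence the chain
   [T_n^k (pi_n phi)], [phi] in [Fm m], lifts step by step to functions [psi_k]
   of [Fm m], whose coordinates grow at most exponentially in [k eps_n].  By
   (A4) and because the closure of [A] generates [T(t)], one lifted step and
   [T(eps_n)] both move every basis function by [eps_n A b_i + o(eps_n)], so
   telescoping with the contractions [T(s)] gives [T(k eps_n) phi ~ psi_k]
   uniformly while [k eps_n] stays bounded.  Density of [\bigcup_m Fm m] and
   contractivity of [T_n] and [T(t)] extend this to all continuous functions,
   and the finite-dimensional distributions follow by induction on the number
   of times, the weak convergence of [iota_n(M_n)] to [P] handling the
   initial law. *)

Section SampleReconstruction.
Variables (R : fieldType) (X : Type) (d : nat) (b : 'I_d -> X -> R).

Definition sample_mx {N} (ys : 'I_N -> X) : 'M[R]_(d, N) := \matrix_(i, j) b i (ys j).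

Definition samples_determine {N} (ys : 'I_N -> X) :=
  forall c : 'rV[R]_d, (c <= kermx (sample_mx ys))%MS ->
    forall x, \sum_i c 0 i * b i x = 0.

(* Adding a point where a kernel combination does not vanish strictly shrinks
   the kernel, so the process stops after at most [d] points. *)
Lemma samples_determine_exist_rec r N (ys : 'I_N -> X) :
  (\rank (kermx (sample_mx ys)) <= r)%N ->
  exists N' (ys' : 'I_N' -> X), samples_determine ys'.
Proof.
elim: r N ys => [|r IH] N ys Hr.
  exists N, ys => c Hc x.
  have : (\rank c <= 0)%N by apply: leq_trans (mxrankS Hc) Hr.
  rewrite leqn0 mxrank_eq0 => /eqP ->.
  by rewrite big1 // => i _; rewrite mxE mul0r.
have [g|ng] := boolp.pselect (samples_determine ys); first by exists N, ys.
have [c Hc [x Hx]] : exists2 c : 'rV[R]_d, (c <= kermx (sample_mx ys))%MS &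
    exists x, \sum_i c 0 i * b i x <> 0.
  apply: contra_notP ng => H c Hc x; apply: contra_notP H => Hx.
  by exists c => //; exists x.
pose ys' : 'I_N.+1 -> X :=
  fun j => if unlift ord_max j is Some j' then ys j' else x.
apply: (IH N.+1 ys').
have sub : (kermx (sample_mx ys') <= kermx (sample_mx ys))%MS.
  apply/sub_kermxP; apply/matrixP => i j.
  have /sub_kermxP/matrixP/(_ i (lift ord_max j)) := submx_refl (kermx (sample_mx ys')).
  rewrite !mxE => E; rewrite -[RHS]E; apply: eq_bigr => l _.
  by rewrite !mxE /ys' liftK.
have lt : (kermx (sample_mx ys') < kermx (sample_mx ys))%MS.
  rewrite ltmxE sub /=; apply/negP => H.
  have /sub_kermxP/matrixP/(_ 0 ord_max) := submx_trans Hc H.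
  rewrite !mxE => E; apply: Hx; rewrite -[RHS]E; apply: eq_bigr => l _.
  by rewrite !mxE /ys' unlift_none.
by rewrite -ltnS; apply: leq_trans (rank_ltmx lt) Hr.
Qed.

Lemma span_sample_reconstruction : exists N (ys : 'I_N -> X) (P : 'I_N -> 'I_d -> R),
  forall (c : 'I_d -> R) x,
    \sum_i (\sum_j (\sum_l c l * b l (ys j)) * P j i) * b i x = \sum_i c i * b i x.
Proof.
have [N [ys g]] := @samples_determine_exist_rec d 0
  (fun j : 'I_0 => False_rect X (notF (ltn_ord j))) (rank_leq_row _).
exists N, ys, (fun j i => pinvmx (sample_mx ys) j i) => c x.
pose cr : 'rV[R]_d := \row_i c i.
pose u := cr *m sample_mx ys.
have Hu : u *m pinvmx (sample_mx ys) *m sample_mx ys = u by rewrite mulmxKpV // submxMl.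
have uE j : \sum_l c l * b l (ys j) = u 0 j.
  by rewrite !mxE; apply: eq_bigr => l _; rewrite !mxE.
have Hk : (u *m pinvmx (sample_mx ys) - cr <= kermx (sample_mx ys))%MS.
  by apply/sub_kermxP; rewrite mulmxBl Hu /u subrr.
have /eqP := g _ Hk x.
rewrite (eq_bigr (fun i => (u *m pinvmx (sample_mx ys)) 0 i * b i x - c i * b i x));
  last by move=> i _; rewrite !mxE mulrBl.
rewrite sumrB subr_eq0 => /eqP <-.
apply: eq_bigr => i _; congr (_ * _); rewrite !mxE; apply: eq_bigr => j _.
by rewrite uE.
Qed.

End SampleReconstruction.

Section SpanContinuity.
Variables (R : realType) (Lb : pseudoPMetricType R).

Lemma cont_cst (c : R) : continuous (fun _ : Lb => c).
Proof. exact: cst_continuous. Qed.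

Lemma cont_add (f g : Lb -> R) :
  continuous f -> continuous g -> continuous (fun x => f x + g x).
Proof. by move=> cf cg x; exact: (@continuousD _ _ _ f g x (cf x) (cg x)). Qed.

Lemma cont_sub (f g : Lb -> R) :
  continuous f -> continuous g -> continuous (fun x => f x - g x).
Proof. by move=> cf cg x; exact: (@continuousB _ _ _ f g x (cf x) (cg x)). Qed.

Lemma cont_mul (f g : Lb -> R) :
  continuous f -> continuous g -> continuous (fun x => f x * g x).
Proof. by move=> cf cg x; exact: (@continuousM _ _ f g x (cf x) (cg x)). Qed.

Lemma cont_lincomb d (c : 'I_d -> R) (b : 'I_d -> Lb -> R) :
  (forall i, continuous (b i)) -> continuous (fun x => \sum_i c i * b i x).
Proof.
elim: d c b => [|d IH] c b cb.
  by under boolp.eq_fun do rewrite big_ord0; exact: cont_cst.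
under boolp.eq_fun do rewrite big_ord_recr /=.
apply: cont_add.
  exact: (IH (fun i => c (widen_ord (leqnSn d) i)) (fun i => b (widen_ord (leqnSn d) i))).
by apply: cont_mul => //; exact: cont_cst.
Qed.

Variables (d : nat) (b : 'I_d -> Lb -> R).

Lemma span_basis i : span_of d b (b i).
Proof.
exists (fun l => (l == i)%:R) => x.
by rewrite (bigD1 i) //= eqxx mul1r big1 ?addr0 // => l /negbTE ->; rewrite mul0r.
Qed.

Lemma span_lin2 (a1 a2 : R) f1 f2 : span_of d b f1 -> span_of d b f2 ->
  span_of d b (fun x => a1 * f1 x + a2 * f2 x).
Proof.
move=> [c1 H1] [c2 H2]; exists (fun i => a1 * c1 i + a2 * c2 i) => x.
rewrite H1 H2 !mulr_sumr -big_split /=; apply: eq_bigr => i _.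
by rewrite mulrDl !mulrA.
Qed.

Lemma span_lincomb d' (c : 'I_d' -> R) (g : 'I_d' -> Lb -> R) :
  (forall j, span_of d b (g j)) -> span_of d b (fun x => \sum_j c j * g j x).
Proof.
move=> /boolp.choice [cc Hcc].
exists (fun l => \sum_j c j * cc j l) => x.
under eq_bigr do rewrite Hcc mulr_sumr.
rewrite exchange_big /=; apply: eq_bigr => l _.
by rewrite mulr_suml; apply: eq_bigr => j _; rewrite mulrA.
Qed.

Lemma span_cont f : (forall i, continuous (b i)) -> span_of d b f -> continuous f.
Proof.
move=> cb [c Hc]; have -> : f = fun x => \sum_i c i * b i x by apply: boolp.funext.
exact: cont_lincomb.
Qed.

End SpanContinuity.

Arguments cont_cst {R Lb}.
Arguments cont_add {R Lb f g}.
Arguments cont_sub {R Lb f g}.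
Arguments cont_mul {R Lb f g}.
Arguments span_cont {R Lb d b f}.

Lemma continuous_bounded {R : realType} {Lb : pseudoPMetricType R} (f : Lb -> R) :
  compact [set: Lb] -> continuous f -> exists C, 0 <= C /\ forall x, `|f x| <= C.
Proof.
move=> cpt fc.
have /compact_bounded [C [_ HC]] : compact (f @` setT).
  by apply: continuous_compact => //; exact: continuous_subspaceT.
exists (Num.max 0 (C + 1)); split; first by rewrite le_max lexx.
move=> x; apply: (HC (Num.max 0 (C + 1))); last by exists x.
by rewrite lt_max ltrDl ltr01 orbT.
Qed.

Lemma continuous_family_bounded {R : realType} {Lb : pseudoPMetricType R} {d}
    (f : 'I_d -> Lb -> R) :
  compact [set: Lb] -> (forall i, continuous (f i)) ->
  exists C, 0 <= C /\ forall i x, `|f i x| <= C.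
Proof.
move=> cpt fc.
have [C HC] := boolp.choice (fun i => continuous_bounded (f i) cpt (fc i)).
have C0 i : 0 <= C i by case: (HC i).
exists (\sum_i C i); split; first exact: sumr_ge0.
move=> i x; apply: le_trans (proj2 (HC i) x) _.
by rewrite (bigD1 i) //= lerDl; exact: sumr_ge0.
Qed.

Lemma span_coordinates {R : realType} {Lb : pseudoPMetricType R} {d} (b : 'I_d -> Lb -> R) :
  exists (coef : (Lb -> R) -> 'I_d -> R) (K : R), [/\ 0 <= K,
    forall f g i, coef (fun x => f x + g x) i = coef f i + coef g i,
    forall f, span_of d b f -> forall x, \sum_i coef f i * b i x = f x &
    forall f C, (forall x, `|f x| <= C) -> \sum_i `|coef f i| <= K * C].
Proof.
have [N [ys [P HP]]] := @span_sample_reconstruction _ _ _ b.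
exists (fun f i => \sum_j f (ys j) * P j i), (\sum_i \sum_j `|P j i|); split.
- by apply: sumr_ge0 => i _; exact: sumr_ge0.
- by move=> f g i; rewrite -big_split /=; apply: eq_bigr => j _; rewrite mulrDl.
- move=> f [c Hc] x; rewrite Hc -(HP c x); apply: eq_bigr => i _; congr (_ * _).
  by apply: eq_bigr => j _; rewrite Hc.
- move=> f C HC; rewrite mulr_suml; apply: ler_sum => i _.
  apply: le_trans (ler_norm_sum _ _ _) _; rewrite mulr_suml; apply: ler_sum => j _.
  by rewrite normrM mulrC ler_wpM2l.
Qed.

Lemma le_expR_geometric (R : realType) (a : nat -> R) (x : R) :
  0 <= x -> 0 <= a 0%N -> (forall j, a j.+1 <= (1 + x) * a j) ->
  forall j, a j <= expR (j%:R * x) * a 0%N.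
Proof.
move=> x0 a0 Ha j; apply: le_trans (_ : a j <= (1 + x) ^+ j * a 0%N) _.
  elim: j => [|j IH]; first by rewrite expr0 mul1r.
  by apply: le_trans (Ha j) _; rewrite exprS -mulrA ler_wpM2l //; lra.
apply: ler_wpM2r => //; elim: j => [|j IH]; first by rewrite expr0 mul0r expR0.
rewrite exprS (_ : j.+1%:R * x = j%:R * x + x); last by rewrite -natr1 mulrDl mul1r.
rewrite expRD mulrC.
by apply: ler_pM => //; [apply: exprn_ge0; lra | lra | exact: expR_ge1Dx].
Qed.

Lemma near_choice (I J : Type) (Y : pointedType) (F : set_system I)
    (P : I -> J -> Y -> Prop) :
  Filter F -> (\forall n \near F, forall j, exists y, P n j y) ->
  exists g : I -> J -> Y, \forall n \near F, forall j, P n j (g n j).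
Proof.
move=> FF HF.
have /boolp.choice [g Hg] : forall nj : I * J, exists y : Y,
    (exists y, P nj.1 nj.2 y) -> P nj.1 nj.2 y.
  move=> [n j]; have [[y Py]|nP] := boolp.pselect (exists y, P n j y).
    by exists y.
  by exists point.
exists (fun n j => g (n, j)); apply: filterS HF => n Hn j.
exact: (Hg (n, j) (Hn j)).
Qed.

Section Approximation.
Variables (R : realType) (L : nat -> finType)
  (pd : forall n, L n.+1 -> L n -> R) (M : forall n, L n -> R).
Hypothesis pd_ge0 : forall n (nu : L n.+1) (mu : L n), 0 <= pd n nu mu.
Hypothesis pd_sum1 : forall n (nu : L n.+1), \sum_(mu : L n) pd n nu mu = 1.
Hypothesis M_gt0 : forall n (lam : L n), 0 < M n lam.
Hypothesis M_coh :
  forall n (mu : L n), \sum_(lam : L n.+1) M n.+1 lam * pd n lam mu = M n mu.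

Local Notation Top := (Top pd M).

Lemma Tker_ge0 n (l l' : L n) : 0 <= Tker pd M n l l'.
Proof.
apply: sumr_ge0 => nu _; apply: mulr_ge0 => //.
by apply: mulr_ge0 => //; apply: divr_ge0; exact: ltW.
Qed.

(* Coherence of [M] is exactly what makes the rows of [T_n] sum to one. *)
Lemma Tker_sum1 n (l : L n) : \sum_l' Tker pd M n l l' = 1.
Proof.
rewrite /Tker exchange_big /=.
under eq_bigr do rewrite -mulr_sumr pd_sum1 mulr1.
transitivity ((\sum_nu M n.+1 nu * pd n nu l) / M n l).
  by rewrite mulr_suml; apply: eq_bigr => nu _; rewrite /pup mulrAC.
by rewrite M_coh divff // gt_eqF.
Qed.

Lemma Top_lincomb n d (c : 'I_d -> R) (g : 'I_d -> L n -> R) l :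
  Top n (fun x => \sum_i c i * g i x) l = \sum_i c i * Top n (g i) l.
Proof.
rewrite /Top; under eq_bigr do rewrite mulr_sumr.
rewrite exchange_big /=; apply: eq_bigr => i _; rewrite mulr_sumr.
by apply: eq_bigr => l' _; rewrite mulrCA.
Qed.

Lemma Top_sub n (g h : L n -> R) l :
  Top n (fun x => g x - h x) l = Top n g l - Top n h l.
Proof. by rewrite /Top -sumrB; apply: eq_bigr => l' _; rewrite mulrBr. Qed.

Lemma Top_norm_le n (g : L n -> R) C :
  (forall x, `|g x| <= C) -> forall l, `|Top n g l| <= C.
Proof.
move=> Hg l; apply: le_trans (ler_norm_sum _ _ _) _.
apply: le_trans (_ : \sum_l' Tker pd M n l l' * C <= C); last first.
  by rewrite -mulr_suml Tker_sum1 mul1r.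
apply: ler_sum => l' _; rewrite normrM ger0_norm ?Tker_ge0 //.
by apply: ler_wpM2l => //; exact: Tker_ge0.
Qed.

Lemma iter_Top_sub n k (g h : L n -> R) l :
  iter k (Top n) (fun x => g x - h x) l = iter k (Top n) g l - iter k (Top n) h l.
Proof.
elim: k l => [//|k IH] l /=.
rewrite -Top_sub; congr (Top n _ l); exact: boolp.funext.
Qed.

Lemma iter_Top_norm_le n k (g : L n -> R) C :
  (forall x, `|g x| <= C) -> forall l, `|iter k (Top n) g l| <= C.
Proof. by elim: k => [|k IH] //= Hg l; apply: Top_norm_le => x; exact: IH. Qed.

Variables (Lb : pseudoPMetricType R) (Tt : R -> (Lb -> R) -> (Lb -> R)).
Hypothesis Tc : forall t (f : Lb -> R), 0 <= t -> continuous f -> continuous (Tt t f).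
Hypothesis Tl : forall t (f g : Lb -> R) (a : R), 0 <= t -> continuous f -> continuous g ->
  Tt t (fun x => a * f x + g x) = (fun x => a * Tt t f x + Tt t g x).
Hypothesis T0 : forall f : Lb -> R, continuous f -> Tt 0 f = f.
Hypothesis Ts : forall s t (f : Lb -> R), 0 <= s -> 0 <= t -> continuous f ->
  Tt (s + t) f = Tt s (Tt t f).
Hypothesis Tp : forall t (f : Lb -> R), 0 <= t -> continuous f -> (forall x, 0 <= f x) ->
  forall x, 0 <= Tt t f x.
Hypothesis T1 : forall t, 0 <= t -> Tt t (fun _ => 1) = (fun _ => 1).
Hypothesis Tsc : forall f : Lb -> R, continuous f -> ucvg (0^'+) (fun t => Tt t f) f.

Lemma sg_zero t : 0 <= t -> Tt t (fun _ => 0) = fun _ => 0.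
Proof.
move=> t0; apply: boolp.funext => x.
have := Tl t (fun _ => 0) (fun _ => 0) 1 t0 (cont_cst 0) (cont_cst 0).
under [X in Tt t X]boolp.eq_fun do rewrite mulr0 addr0.
move=> /(congr1 (fun F => F x)) /=; rewrite mul1r; lra.
Qed.

Lemma sg_cst t c : 0 <= t -> Tt t (fun _ => c) = fun _ => c.
Proof.
move=> t0; have := Tl t (fun _ => 1) (fun _ => 0) c t0 (cont_cst 1) (cont_cst 0).
under [X in Tt t X]boolp.eq_fun do rewrite mulr1 addr0.
move=> ->; rewrite T1 // sg_zero //.
by apply: boolp.funext => x; rewrite mulr1 addr0.
Qed.

Lemma sg_sub t (f g : Lb -> R) x : 0 <= t -> continuous f -> continuous g ->
  Tt t (fun y => f y - g y) x = Tt t f x - Tt t g x.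
Proof.
move=> t0 cf cg.
have -> : (fun y => f y - g y) = (fun y => -1 * g y + f y).
  by apply: boolp.funext => y; rewrite mulN1r addrC.
by rewrite Tl // mulN1r addrC.
Qed.

Lemma sg_lincomb t d (c : 'I_d -> R) (b : 'I_d -> Lb -> R) :
  0 <= t -> (forall i, continuous (b i)) ->
  Tt t (fun x => \sum_i c i * b i x) = fun x => \sum_i c i * Tt t (b i) x.
Proof.
move=> t0; elim: d c b => [|d IH] c b cb.
  under boolp.eq_fun do rewrite big_ord0.
  by rewrite sg_zero //; apply: boolp.funext => x; rewrite big_ord0.
pose c' i := c (widen_ord (leqnSn d) i); pose b' i := b (widen_ord (leqnSn d) i).
have cb' i : continuous (b' i) by exact: cb.
under boolp.eq_fun do rewrite big_ord_recr /= addrC.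
rewrite Tl //; last exact: cont_lincomb.
by rewrite (IH c' b') //; apply: boolp.funext => x; rewrite big_ord_recr /= addrC.
Qed.

(* Positivity and conservativity make each [T(t)] a sup-norm contraction. *)
Lemma sg_norm_le t (f : Lb -> R) C : 0 <= t -> continuous f ->
  (forall x, `|f x| <= C) -> forall x, `|Tt t f x| <= C.
Proof.
move=> t0 cf Hf x; have cC := cont_cst C.
have shift (a : R) : (forall y, 0 <= a * f y + C) -> 0 <= a * Tt t f x + C.
  move=> H; have := Tp t (fun y => a * f y + C) t0 _ H x; rewrite Tl // sg_cst //; apply.
  by apply: cont_add => //; apply: cont_mul => //; exact: cont_cst.
rewrite ler_norml; apply/andP; split.
  have := shift 1; rewrite mul1r -lerBlDr sub0r; apply => y.
  by rewrite mul1r -lerBlDr sub0r; have := Hf y; rewrite ler_norml => /andP[].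
have := shift (-1); rewrite mulN1r addrC subr_ge0; apply => y.
by rewrite mulN1r addrC subr_ge0; have := Hf y; rewrite ler_norml => /andP[].
Qed.

Lemma sg_telescope s k (f : nat -> Lb -> R) delta : 0 <= s ->
  (forall j, continuous (f j)) ->
  (forall j, (j < k)%N -> forall x, `|Tt s (f j) x - f j.+1 x| <= delta) ->
  forall x, `|Tt (k%:R * s) (f 0%N) x - f k x| <= k%:R * delta.
Proof.
move=> s0 cf; elim: k => [|k IH] Hstep x.
  by rewrite !mul0r T0 // subrr normr0.
have ks0 : 0 <= k%:R * s by exact: mulr_ge0.
have cTk := Tc _ _ ks0 (cf 0%N).
have -> : k.+1%:R * s = s + k%:R * s by rewrite -natr1 mulrDl mul1r addrC.
rewrite Ts // -natr1 mulrDl mul1r -(subrK (Tt s (f k) x) (Tt s _ x)) -addrA.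
apply: le_trans (ler_normD _ _) _; apply: lerD; last exact: Hstep.
rewrite -sg_sub //.
by apply: sg_norm_le => //; [exact: cont_sub | move=> y; apply: IH => j /ltnW; exact: Hstep].
Qed.

Lemma sg_time_cont (f : Lb -> R) t : continuous f -> 0 <= t -> forall e, 0 < e ->
  exists2 delta, 0 < delta & forall u, 0 <= u -> `|u - t| < delta ->
    forall x, `|Tt u f x - Tt t f x| <= e.
Proof.
move=> cf t0 e e0.
have [delta /= delta0 Hdelta] := Tsc f cf e e0.
exists delta => // u u0 ut x.
have close_times (v w : R) : 0 <= v -> 0 <= w -> `|w - v| < delta ->
    `|Tt w f x - Tt v f x| <= e.
  move=> v0 w0 wv; wlog vw : v w v0 w0 wv / v <= w.
    move=> H; have [/H|/ltW wv'] := leP v w; first exact.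
    by rewrite distrC; apply: H => //; rewrite distrC.
  have [->|vw'] := eqVneq w v; first by rewrite subrr normr0 ltW.
  have wv0 : 0 <= w - v by rewrite subr_ge0.
  have -> : w = v + (w - v) by rewrite addrC subrK.
  rewrite Ts // -sg_sub //; last exact: Tc.
  apply: sg_norm_le => //; first by apply: cont_sub => //; exact: Tc.
  move=> y; apply: ltW; apply: Hdelta.
    by rewrite /ball /= sub0r normrN.
  by rewrite lt_def subr_eq0 vw' wv0.
exact: close_times.
Qed.

Section ChainComparison.
Variables (d : nat) (b : 'I_d -> Lb -> R) (coef : (Lb -> R) -> 'I_d -> R) (K : R).
Hypothesis cb : forall i, continuous (b i).
Hypothesis coefD : forall f g i, coef (fun x => f x + g x) i = coef f i + coef g i.
Hypothesis coefK : forall f, span_of d b f -> forall x, \sum_i coef f i * b i x = f x.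
Hypothesis coef_norm :
  forall f C, (forall x, `|f x| <= C) -> \sum_i `|coef f i| <= K * C.
Hypothesis K0 : 0 <= K.

Local Notation cnorm f := (\sum_i `|coef f i|).

Lemma span_coefE f : span_of d b f -> f = fun x => \sum_i coef f i * b i x.
Proof. by move=> fs; apply: boolp.funext => x; rewrite coefK. Qed.

Variables (g : 'I_d -> Lb -> R) (s r B : R).
Hypothesis g_span : forall i, span_of d b (g i).

(* One step of the discrete evolution, read in the basis [b]: [b i] is
   replaced by [g i], whose trace on [L_n] is [T_n] applied to that of [b i]. *)
Definition chain_step (f : Lb -> R) : Lb -> R := fun x => \sum_i coef f i * g i x.

Lemma chain_step_span f : span_of d b (chain_step f).
Proof. exact: span_lincomb. Qed.

Lemma iter_chain_step_span k f : span_of d b f -> span_of d b (iter k chain_step f).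
Proof. by case: k => [//|k] _; exact: chain_step_span. Qed.

Lemma pi_iter_chain_step (iota : forall n, L n -> Lb) n :
  (forall i, pi_n iota n (g i) = Top n (pi_n iota n (b i))) ->
  forall k f, span_of d b f ->
    pi_n iota n (iter k chain_step f) = iter k (Top n) (pi_n iota n f).
Proof.
move=> gT k f fs; elim: k => [//|k IH]; rewrite !iterS -IH.
apply: boolp.funext => l; rewrite [in RHS](span_coefE _ (iter_chain_step_span k _ fs)).
rewrite [RHS]Top_lincomb; apply: eq_bigr => i _; congr (_ * _).
by rewrite -gT.
Qed.

Hypotheses (s0 : 0 <= s) (r0 : 0 <= r) (B0 : 0 <= B).
Hypothesis Tb_g : forall i x, `|Tt s (b i) x - g i x| <= s * r.
Hypothesis g_b : forall i x, `|g i x - b i x| <= s * B.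

Lemma chain_step_err f : span_of d b f ->
  forall x, `|Tt s f x - chain_step f x| <= cnorm f * (s * r).
Proof.
move=> fs x; rewrite {1}(span_coefE _ fs) sg_lincomb // -sumrB mulr_suml.
apply: le_trans (ler_norm_sum _ _ _) _; apply: ler_sum => i _.
by rewrite -mulrBr normrM ler_wpM2l.
Qed.

Lemma chain_step_norm f : span_of d b f ->
  cnorm (chain_step f) <= (1 + s * (K * B)) * cnorm f.
Proof.
move=> fs; pose D x := \sum_i coef f i * (g i x - b i x).
have -> : chain_step f = fun x => f x + D x.
  rewrite {2}(span_coefE _ fs); apply: boolp.funext => x.
  by rewrite -big_split /=; apply: eq_bigr => i _; rewrite -mulrDr addrC subrK.
have D_le x : `|D x| <= cnorm f * (s * B).
  apply: le_trans (ler_norm_sum _ _ _) _; rewrite mulr_suml; apply: ler_sum => i _.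
  by rewrite normrM ler_wpM2l.
have HD := coef_norm _ _ D_le.
under eq_bigr do rewrite coefD.
apply: le_trans (ler_sum _ (fun i _ => ler_normD _ _)) _; rewrite big_split /=.
rewrite mulrDl mul1r lerD2l (_ : s * (K * B) * _ = K * (cnorm f * (s * B))) //.
by ring.
Qed.

Lemma iter_chain_step_norm f j : span_of d b f ->
  cnorm (iter j chain_step f) <= expR (j%:R * (s * (K * B))) * cnorm f.
Proof.
move=> fs; apply: (@le_expR_geometric _ (fun j => cnorm (iter j chain_step f))).
- by apply: mulr_ge0 => //; exact: mulr_ge0.
- exact: sumr_ge0.
- by move=> k; rewrite iterS; apply: chain_step_norm; exact: iter_chain_step_span.
Qed.

Lemma sg_iter_chain_step f k : span_of d b f -> forall x,
  `|Tt (k%:R * s) f x - iter k chain_step f x| <=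
    k%:R * s * r * expR (k%:R * s * (K * B)) * cnorm f.
Proof.
move=> fs x.
have -> : k%:R * s * r * expR (k%:R * s * (K * B)) * cnorm f =
    k%:R * (expR (k%:R * (s * (K * B))) * cnorm f * (s * r)) by rewrite !mulrA; ring.
apply: (@sg_telescope s k (fun j => iter j chain_step f)) => //.
  by move=> j; apply: (span_cont cb); exact: iter_chain_step_span.
move=> j /ltnW jk y; rewrite iterS.
apply: le_trans (chain_step_err _ (iter_chain_step_span j _ fs) y) _.
rewrite ler_wpM2r //; first by apply: mulr_ge0.
apply: le_trans (iter_chain_step_norm _ j fs) _; rewrite ler_wpM2r ?sumr_ge0 //.
rewrite ler_expR ler_wpM2r ?ler_nat //.
by apply: mulr_ge0 => //; exact: mulr_ge0.
Qed.

End ChainComparison.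

Variables (iota : forall n, L n -> Lb) (Fm : nat -> set (Lb -> R)) (eps : nat -> R)
  (A : (Lb -> R) -> (Lb -> R)).
Hypothesis cpt : compact [set: Lb].
Hypothesis HFm : forall m, fin_dim_subspace (Fm m).
Hypothesis HA3 : forall m, \forall n \near \oo, forall f, Fm m f ->
  exists g, Fm m g /\ pi_n iota n g = Top n (pi_n iota n f).
Hypothesis eps_gt0 : forall n, 0 < eps n.
Hypothesis eps_cvg : eps @ \oo --> 0.
Hypothesis HA4 : forall m f, Fm m f ->
  Fm m (A f) /\
  forall g : nat -> Lb -> R,
    (\forall n \near \oo, Fm m (g n) /\
       pi_n iota n (g n) =
         (fun lam => (Top n (pi_n iota n f) lam - pi_n iota n f lam) / eps n)) ->
    ucvg \oo g (A f).
Hypothesis Hgen : generated_by_closure Tt (\bigcup_m Fm m) A.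

Lemma ucvg_eps (G : R -> Lb -> R) f : ucvg (0^'+) G f -> ucvg \oo (fun n => G (eps n)) f.
Proof.
move=> HG e e0; have [delta /= delta0 Hdelta] := HG e e0.
apply: filterS (cvgr0_norm_lt _ eps_cvg _ delta0) => n Hn.
by apply: Hdelta; [rewrite /ball /= sub0r normrN | exact: eps_gt0].
Qed.

Section Basis.
Variables (m d : nat) (b : 'I_d -> Lb -> R).
Hypotheses (HF : Fm m = span_of d b) (cb : forall i, continuous (b i)).

Lemma basis_in_Fm i : Fm m (b i).
Proof. by rewrite HF; exact: span_basis. Qed.

Lemma cont_A_basis i : continuous (A (b i)).
Proof. by apply: (span_cont cb); rewrite -HF; exact: (HA4 _ _ (basis_in_Fm i)).1. Qed.

Lemma basis_lift_exists : exists g : nat -> 'I_d -> Lb -> R, \forall n \near \oo,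
  forall i, Fm m (g n i) /\ pi_n iota n (g n i) = Top n (pi_n iota n (b i)).
Proof.
apply: (@near_choice _ _ (Lb -> R) \oo
  (fun n i g => Fm m g /\ pi_n iota n g = Top n (pi_n iota n (b i)))).
apply: filterS (HA3 m) => n Hn i.
exact: Hn _ (basis_in_Fm i).
Qed.

Lemma sg_generator_basis i :
  ucvg \oo (fun n x => (Tt (eps n) (b i) x - b i x) / eps n) (A (b i)).
Proof.
apply: (ucvg_eps (fun s x => (Tt s (b i) x - b i x) / s)).
apply/(Hgen _ _ (cb i) (cont_A_basis i)); exists (fun=> b i); split.
  by move=> _; exists m => //; exact: basis_in_Fm.
by split=> e e0; apply: nearW => _ x; rewrite subrr normr0.
Qed.

Lemma basis_lift_generator (g : nat -> 'I_d -> Lb -> R) :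
  (\forall n \near \oo,
     forall i, Fm m (g n i) /\ pi_n iota n (g n i) = Top n (pi_n iota n (b i))) ->
  forall i, ucvg \oo (fun n x => (g n i x - b i x) / eps n) (A (b i)).
Proof.
move=> Hg i; apply: (HA4 _ _ (basis_in_Fm i)).2.
apply: filterS Hg => n /(_ i) [gF gT]; split; last first.
  by apply: boolp.funext => l; rewrite /pi_n -gT.
rewrite HF (_ : (fun x => _) = fun x => (eps n)^-1 * g n i x + - (eps n)^-1 * b i x).
  by apply: span_lin2; rewrite -HF //; exact: basis_in_Fm.
by apply: boolp.funext => x; rewrite mulrBl mulrC mulNr (mulrC _ (b i x)).
Qed.

(* Both the semigroup over one time step [eps n] and the lifted chain step
   move [b i] by [eps n * A (b i) + o(eps n)], uniformly. *)
Lemma basis_lift_consistent (g : nat -> 'I_d -> Lb -> R) :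
  (\forall n \near \oo,
     forall i, Fm m (g n i) /\ pi_n iota n (g n i) = Top n (pi_n iota n (b i))) ->
  exists2 B, 0 <= B & forall r, 0 < r -> \forall n \near \oo, forall i x,
    `|Tt (eps n) (b i) x - g n i x| <= eps n * r /\
    `|g n i x - b i x| <= eps n * B.
Proof.
move=> Hg.
have [A0 [A00 HA0]] := continuous_family_bounded _ cpt cont_A_basis.
exists (A0 + 1); first lra.
move=> r r0; have r2 : 0 < Num.min (r / 2) 1 by rewrite lt_min ltr01 andbT; lra.
apply: filterS2 (filter_forall _ (fun i => basis_lift_generator _ Hg i _ r2))
  (filter_forall _ (fun i => sg_generator_basis i _ r2)) => n Hlift Hsg i x.
have e0 := eps_gt0 n.
have := Hlift i x; have := Hsg i x; rewrite !lt_min => /andP[Hu _] /andP[Hv Hv1].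
set u := _ - A (b i) x in Hu; set v := _ - A (b i) x in Hv Hv1.
have Av : g n i x - b i x = eps n * (v + A (b i) x).
  by rewrite /v subrK mulrC divfK // gt_eqF.
split.
  have -> : Tt (eps n) (b i) x - g n i x = eps n * (u - v).
    by rewrite /u /v; field; rewrite gt_eqF.
  rewrite normrM gtr0_norm // ler_pM2l //.
  by apply: le_trans (ler_normD _ _) _; rewrite normrN; lra.
rewrite Av normrM gtr0_norm // ler_pM2l //.
by apply: le_trans (ler_normD _ _) _; have := HA0 i x; lra.
Qed.

End Basis.

Arguments basis_lift_exists {m d b}.
Arguments basis_lift_consistent {m d b}.
Lemma chain_span_error m phi (T : R) : Fm m phi -> 0 <= T ->
  forall e, 0 < e -> \forall n \near \oo, forall k, (k%:R * eps n <= T) ->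
    forall lam : L n,
      `|iter k (Top n) (pi_n iota n phi) lam - Tt (k%:R * eps n) phi (iota n lam)| <= e.
Proof.
move=> phiF T_ge0 e e0.
have [d [b [cb HF]]] := HFm m.
have phis : span_of d b phi by rewrite -HF.
have [coef [K [K0 coefD coefK coef_norm]]] := span_coordinates b.
have [g Hg] := basis_lift_exists HF.
have [B B0 HB] := basis_lift_consistent HF cb g Hg.
have KB0 : 0 <= K * B by exact: mulr_ge0.
pose C := T * expR (T * (K * B)) * \sum_i `|coef phi i|.
have C0 : 0 <= C by rewrite !mulr_ge0 ?expR_ge0 ?sumr_ge0.
pose r := e / (C + 1).
have r0 : 0 < r by apply: divr_gt0 => //; lra.
have Cr : C * r <= e by rewrite /r mulrA ler_pdivrMr; nra.
apply: filterS2 Hg (HB r r0) => n Hgn HBn k kT lam.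
have e0n := eps_gt0 n.
have gs i : span_of d b (g n i) by rewrite -HF; case: (Hgn i).
have gT i : pi_n iota n (g n i) = Top n (pi_n iota n (b i)) by case: (Hgn i).
rewrite -(@pi_iter_chain_step _ b coef coefK _ gs _ _ gT _ _ phis) distrC.
apply: le_trans (@sg_iter_chain_step _ b coef K cb coefD coefK coef_norm K0 (g n) (eps n)
  r B gs (ltW e0n) (ltW r0) B0 (fun i x => (HBn i x).1) (fun i x => (HBn i x).2)
  phi k phis (iota n lam)) _.
apply: le_trans Cr; rewrite (_ : C * r = T * r * expR (T * (K * B)) * \sum_i `|coef phi i|);
  last by rewrite /C; ring.
have ke0 : 0 <= k%:R * eps n by rewrite mulr_ge0 // ltW.
apply: ler_wpM2r; first exact: sumr_ge0.
apply: ler_pM.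
- by rewrite mulr_ge0 // ltW.
- exact: expR_ge0.
- by apply: ler_wpM2r => //; exact: ltW.
- by rewrite ler_expR; exact: ler_wpM2r.
Qed.

Lemma chain_cvg_span m phi (t : R) (k : nat -> nat) : Fm m phi -> 0 <= t ->
  (fun n => (k n)%:R * eps n) @ \oo --> t ->
  forall e, 0 < e -> \forall n \near \oo, forall lam : L n,
    `|iter (k n) (Top n) (pi_n iota n phi) lam - Tt t phi (iota n lam)| < e.
Proof.
move=> phiF t0 kt e e0.
have [d [b [cb HF]]] := HFm m.
have cphi : continuous phi by apply: (span_cont cb); rewrite -HF.
have e3 : 0 < e / 3 by lra.
have [delta delta0 Hdelta] := sg_time_cont _ _ cphi t0 _ e3.
have kt1 : \forall n \near \oo, (k n)%:R * eps n <= t + 1.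
  by apply: (cvgr_le _ kt); lra.
have ktd : \forall n \near \oo, `|(k n)%:R * eps n - t| < delta.
  by move/cvgrPdist_lt : kt => /(_ _ delta0); apply: filterS => n; rewrite distrC.
have t1 : 0 <= t + 1 by lra.
apply: filterS3 (chain_span_error _ _ _ phiF t1 _ e3) kt1 ktd => n Herr kn1 knd lam.
have ke0 : 0 <= (k n)%:R * eps n by rewrite mulr_ge0 // ltW.
have := Herr _ kn1 lam; have := Hdelta _ ke0 knd (iota n lam).
set X := iter _ _ _ _; set Y := Tt (_ * _) _ _; set Z := Tt t _ _ => D2 D1.
have := ler_normD (X - Y) (Y - Z).
rewrite (_ : X - Y + (Y - Z) = X - Z); last by ring.
lra.
Qed.

Hypothesis Hdense : forall f : Lb -> R, continuous f ->
  exists fk : nat -> Lb -> R, (forall k, (\bigcup_m Fm m) (fk k)) /\ ucvg \oo fk f.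

(* [T_n] and [T(t)] are both sup-norm contractions, so the convergence
   extends from the dense subspace [\bigcup_m Fm m] to all of [C(Lb)]. *)
Lemma chain_cvg f (t : R) (k : nat -> nat) : continuous f -> 0 <= t ->
  (fun n => (k n)%:R * eps n) @ \oo --> t ->
  forall e, 0 < e -> \forall n \near \oo, forall lam : L n,
    `|iter (k n) (Top n) (pi_n iota n f) lam - Tt t f (iota n lam)| < e.
Proof.
move=> cf t0 kt e e0; have e3 : 0 < e / 3 by lra.
have [fk [fkF fkf]] := Hdense _ cf.
have [N _ HN] := fkf _ e3.
have [m _ phiF] := fkF N; set phi := fk N in phiF *.
have [d [b [cb HF]]] := HFm m.
have cphi : continuous phi by apply: (span_cont cb); rewrite -HF.
have f_phi x : `|f x - phi x| <= e / 3.
  by rewrite distrC; apply: ltW; exact: (HN N (leqnn N)).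

apply: filterS (chain_cvg_span _ _ _ _ phiF t0 kt _ e3) => n Hn lam.
have D1 : `|iter (k n) (Top n) (pi_n iota n f) lam -
    iter (k n) (Top n) (pi_n iota n phi) lam| <= e / 3.
  by rewrite -iter_Top_sub; apply: iter_Top_norm_le => l; exact: f_phi.
have D3 : `|Tt t phi (iota n lam) - Tt t f (iota n lam)| <= e / 3.
  rewrite -sg_sub //; apply: sg_norm_le => //; first exact: cont_sub.
  by move=> x; rewrite distrC.
have D2 := Hn lam.
move: D1 D2 D3; set X := iter _ _ (pi_n iota n f) lam; set Y := iter _ _ _ lam.
set W := Tt t phi _; set Z := Tt t f _ => D1 D2 D3.
have := ler_normD (X - Y + (Y - W)) (W - Z); have := ler_normD (X - Y) (Y - W).
rewrite (_ : X - Y + (Y - W) + (W - Z) = X - Z); last by ring.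
lra.
Qed.

Lemma truncn_eps_cvg (x : R) : 0 <= x ->
  (fun n => (Num.truncn (x / eps n))%:R * eps n) @ \oo --> x.
Proof.
move=> x0; apply/cvgrPdist_lt => e e0.
apply: filterS (cvgr0_norm_lt _ eps_cvg _ e0) => n; have en := eps_gt0 n.
rewrite gtr0_norm // => ene.
have xe0 : 0 <= x / eps n by rewrite divr_ge0 // ltW.
have lo : (Num.truncn (x / eps n))%:R * eps n <= x by rewrite -ler_pdivlMr // truncn_le.
have hi : x < (Num.truncn (x / eps n))%:R * eps n + eps n.
  have := truncnS_gt (x / eps n); rewrite -natr1 ltr_pdivrMr //.
  by rewrite mulrDl mul1r.
rewrite ger0_norm ?subr_ge0 //; lra.
Qed.

Lemma semi_fdd_cont ts fs (p : R) : size ts = size fs -> 0 <= p -> path <=%R p ts ->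
  (forall i, (i < size fs)%N -> continuous (nth (fun _ => 0) fs i)) ->
  continuous (semi_fdd Tt p (zip ts fs)).
Proof.
elim: ts fs p => [|t ts IH] [|f fs] p //= Hs p0; first by move=> _ _; exact: cont_cst.
move=> /andP[pt Hpath] Hc; have t0 : 0 <= t by exact: le_trans pt.
apply: Tc; first by rewrite subr_ge0.
apply: cont_mul; first exact: (Hc 0%N).
by apply: IH => //; [case: Hs | move=> i Hi; exact: (Hc i.+1)].
Qed.

Lemma chain_fdd_cvg ts fs (p : R) : size ts = size fs -> 0 <= p -> path <=%R p ts ->
  (forall i, (i < size fs)%N -> continuous (nth (fun _ => 0) fs i)) ->
  forall e, 0 < e -> \forall n \near \oo, forall lam : L n,
    `|chain_fdd pd M iota n (Num.truncn (p / eps n))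
        (zip [seq Num.truncn (t / eps n) | t <- ts] fs) lam
      - semi_fdd Tt p (zip ts fs) (iota n lam)| < e.
Proof.
elim: ts fs p => [|t ts IH] [|f fs] p //= Hs p0.
  by move=> _ _ e e0; apply: nearW => n lam; rewrite subrr normr0.
move=> /andP[pt Htail] Hc e e0; move: Hs => [Hs].
have t0 : 0 <= t by exact: le_trans pt.
have cf : continuous f := Hc 0%N isT.
have Hc' i : (i < size fs)%N -> continuous (nth (fun _ => 0) fs i) by exact: (Hc i.+1).
have cS := semi_fdd_cont _ _ _ Hs t0 Htail Hc'.
set S := semi_fdd Tt t (zip ts fs) in cS *.
have [Bf [Bf0 HBf]] := continuous_bounded f cpt cf.
have eB : 0 < e / (2 * (Bf + 1)) by apply: divr_gt0 => //; lra.
have e2 : 0 < e / 2 by lra.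
pose kk n := (Num.truncn (t / eps n) - Num.truncn (p / eps n))%N.
have kk_cvg : (fun n => (kk n)%:R * eps n) @ \oo --> t - p.
  apply: cvg_trans (cvgB (truncn_eps_cvg _ t0) (truncn_eps_cvg _ p0)).
  apply: near_eq_cvg; apply: nearW => n; rewrite /kk natrB ?mulrBl //.
  by apply: le_truncn; apply: ler_wpM2r => //; rewrite invr_ge0 ltW.
have tp0 : 0 <= t - p by rewrite subr_ge0.
apply: filterS2 (IH _ _ Hs t0 Htail Hc' _ eB)
  (chain_cvg _ _ _ (cont_mul cf cS) tp0 kk_cvg _ e2) => n Htl Hhd lam.
move: (Hhd lam); rewrite -/(kk n).
set Y := iter (kk n) _ (pi_n _ _ _) lam; set X := iter (kk n) _ _ lam.
set Z := Tt _ _ _ => HY.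
have D : `|X - Y| <= e / 2.
  rewrite /X /Y -iter_Top_sub; apply: iter_Top_norm_le => l; rewrite -mulrBr normrM.
  apply: le_trans (_ : Bf * (e / (2 * (Bf + 1))) <= _).
    by apply: ler_pM => //; exact: ltW.
  by rewrite mulrA ler_pdivrMr; nra.
have := ler_normD (X - Y) (Y - Z).
rewrite (_ : X - Y + (Y - Z) = X - Z); last by ring.
lra.
Qed.

Variable P : probability (g_sigma_algebraType (@open Lb)) R.
Hypothesis M_sum1 : forall n, \sum_(lam : L n) M n lam = 1.
Hypothesis Hweak : forall f : Lb -> R, continuous f ->
  (fun n => \sum_(lam : L n) M n lam * f (iota n lam)) @ \oo --> Rintegral P setT f.

Lemma fdd_cvg (ts : seq R) (fs : seq (Lb -> R)) :
  size ts = size fs -> all (fun t => 0 <= t) ts -> sorted <%R ts ->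
  (forall i, (i < size fs)%N -> continuous (nth (fun _ => 0) fs i)) ->
  (fun n => \sum_(lam : L n) M n lam *
      chain_fdd pd M iota n 0 (zip [seq Num.truncn (t / eps n) | t <- ts] fs) lam)
    @ \oo --> Rintegral P setT (semi_fdd Tt 0 (zip ts fs)).
Proof.
move=> Hs Hall Hsort Hc.
have Hpath : path <=%R 0 ts.
  case: ts Hall Hsort {Hs Hc} => //= t ts /andP[-> _] Hs /=.
  by apply: sub_path Hs => x y /ltW.
have cS := semi_fdd_cont _ _ _ Hs (lexx 0) Hpath Hc.
set S := semi_fdd Tt 0 (zip ts fs) in cS *.
apply/cvgrPdist_lt => e e0; have e2 : 0 < e / 2 by lra.
move/cvgrPdist_lt: (Hweak _ cS) => /(_ _ e2) Hw.
apply: filterS2 Hw (chain_fdd_cvg _ _ _ Hs (lexx 0) Hpath Hc _ e2).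
move=> n Hn; rewrite mul0r truncn0 => Hch.
set ch := chain_fdd pd M iota n 0 _ in Hch *.
have D : `|\sum_lam M n lam * S (iota n lam) - \sum_lam M n lam * ch lam| <= e / 2.
  rewrite -sumrB; apply: le_trans (ler_norm_sum _ _ _) _.
  apply: le_trans (_ : \sum_lam M n lam * (e / 2) <= _); last first.
    by rewrite -mulr_suml M_sum1 mul1r.
  apply: ler_sum => lam _; rewrite -mulrBr normrM ger0_norm; last exact: ltW.
  by apply: ler_wpM2l; [exact: ltW | rewrite distrC; exact: ltW].
move: Hn D; set I := Rintegral _ _ _; set W := \sum_lam _ * S _; set Y := \sum_lam _.
move=> Hn D; have := ler_normD (I - W) (W - Y).
rewrite (_ : I - W + (W - Y) = I - Y); last by ring.
lra.
Qed.

End Approximation.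

Theorem proposition1p8 (R : realType) (L : nat -> finType)
  (pd : forall n, L n.+1 -> L n -> R) (M : forall n, L n -> R)
  (Lb : pseudoPMetricType R) (iota : forall n, L n -> Lb)
  (Fm : nat -> set (Lb -> R)) (eps : nat -> R)
  (A : (Lb -> R) -> (Lb -> R)) (Tt : R -> (Lb -> R) -> (Lb -> R))
  (P : probability (g_sigma_algebraType (@open Lb)) R) :
  (* the graded set and the down-kernel *)
  #|L 0| = 1%N ->
  (forall n (nu : L n.+1) (mu : L n), 0 <= pd n nu mu) ->
  (forall n (nu : L n.+1), \sum_(mu : L n) pd n nu mu = 1) ->
  (* the coherent system, positive everywhere *)
  (forall n (lam : L n), 0 < M n lam) ->
  (forall n, \sum_(lam : L n) M n lam = 1) ->
  (forall n (mu : L n), \sum_(lam : L n.+1) M n.+1 lam * pd n lam mu = M n mu) ->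
  (* the embeddings *)
  (forall n, injective (iota n)) ->
  (* (A1) *)
  hausdorff_space Lb -> compact [set: Lb] ->
  (exists D : set Lb, countable D /\ dense D) ->
  (* (A2) *)
  (forall O : set Lb, open O -> O !=set0 ->
     \forall n \near \oo, exists lam : L n, O (iota n lam)) ->
  (* (A3): F = \bigcup_m F^m, ascending finite-dim subspaces, dense in C(Lb) *)
  (forall m, fin_dim_subspace (Fm m)) ->
  (forall m, Fm m `<=` Fm m.+1) ->
  (forall f : Lb -> R, continuous f ->
     exists fk : nat -> Lb -> R,
       (forall k, (\bigcup_m Fm m) (fk k)) /\ ucvg \oo fk f) ->
  (forall m, \forall n \near \oo,
     (forall f g, Fm m f -> Fm m g -> pi_n iota n f = pi_n iota n g -> f = g) /\
     (forall f, Fm m f ->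
        exists g, Fm m g /\ pi_n iota n g = Top pd M n (pi_n iota n f))) ->
  (* (A4) *)
  (forall n, 0 < eps n) -> eps @ \oo --> 0 ->
  (forall m f, Fm m f ->
     Fm m (A f) /\
     forall g : nat -> Lb -> R,
       (\forall n \near \oo, Fm m (g n) /\
          pi_n iota n (g n) =
            (fun lam => (Top pd M n (pi_n iota n f) lam - pi_n iota n f lam)
                        / eps n)) ->
       ucvg \oo g (A f)) ->
  (* (A5) *)
  (\bigcup_m Fm m) (fun _ => 1) ->
  (* the closure of A generates the conservative Markov semigroup T(t) *)
  markov_semigroup Tt -> generated_by_closure Tt (\bigcup_m Fm m) A ->
  (* iota_n(M_n) converges weakly to P *)
  (forall f : Lb -> R, continuous f ->
     (fun n => \sum_(lam : L n) M n lam * f (iota n lam)) @ \oo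
       --> Rintegral P setT f) ->
  (* convergence of finite-dimensional distributions *)
  forall (ts : seq R) (fs : seq (Lb -> R)),
    size ts = size fs ->
    all (fun t => 0 <= t) ts -> sorted <%R ts ->
    (forall i, (i < size fs)%N -> continuous (nth (fun _ => 0) fs i)) ->
    (fun n => \sum_(lam : L n) M n lam *
        chain_fdd pd M iota n 0 (zip [seq Num.truncn (t / eps n) | t <- ts] fs) lam)
      @ \oo --> Rintegral P setT (semi_fdd Tt 0 (zip ts fs)).
Proof.
move=> _ pd_ge0 pd_sum1 M_gt0 M_sum1 M_coh _ _ cpt _ _ HFm _ Hdense HA3
  eps_gt0 eps_cvg HA4 _ Hsg Hgen Hweak.
case: Hsg => Tc [Tl [T0 [Ts [Tp [T1 Tsc]]]]].
have HA3' m : \forall n \near \oo, forall f, Fm m f ->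
    exists g, Fm m g /\ pi_n iota n g = Top pd M n (pi_n iota n f).
  by apply: filterS (HA3 m) => n [].
exact: (fdd_cvg _ _ _ _ pd_ge0 pd_sum1 M_gt0 M_coh _ _ Tc Tl T0 Ts Tp T1 Tsc _ _ _ _
  cpt HFm HA3' eps_gt0 eps_cvg HA4 Hgen Hdense _ M_sum1 Hweak).
Qed.
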